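(* Let $R$ be a regular run and $t>0$. The guard of SignalOpen [Dir = close and SafeToOpen] holds at $t$ (equivalently, SignalOpen fires at $t$) if and only if SafeToOpen becomes true at $t$. Consequently, SignalOpen fires at a moment $t>0$ only if TrackStatus$(x)$ becomes empty at $t$ for some track $x$.
   Context: Setting (evolving algebra for the railroad crossing). States are structures over a vocabulary containing: a finite universe Tracks; the reals and ExtendedReals $=\mathbb{R}\cup\{\infty\}$ with standard $<$ and $+$ ($\infty$ largest); a nullary real-valued symbol $\mathrm{CT}$ (current time); positive real constants $d_{close},d_{open},d_{min},d_{max}$ with $d_{close}<d_{min}\le d_{max}$; a unary function TrackStatus from Tracks to $\{\text{empty},\text{coming},\text{incrossing}\}$; a unary function Deadline from Tracks to ExtendedReals; a nullary Dir with values in $\{\text{open},\text{close}\}$; a nullary GateStatus with values in $\{\text{opened},\text{closed}\}$. Put $W=d_{min}-d_{close}$ and $\Delta_{close}=d_{close}+(d_{max}-d_{min})=d_{max}-W$. For a track $x$, $s(x)$ is the condition [$\mathrm{TrackStatus}(x)=\text{empty}$ or $\mathrm{CT}+d_{open}<\mathrm{Deadline}(x)$], and SafeToOpen is $\forall x\in\mathrm{Tracks}\ s(x)$. The program has two modules (agents). Gate: simultaneously OpenGate ''if Dir=open then GateStatus:=opened'' and CloseGate ''if Dir=close then GateStatus:=closed''. Controller: simultaneously, for every track $x$, SetDeadline$(x)$ ''if TrackStatus$(x)$=coming and Deadline$(x)=\infty$ then Deadline$(x):=\mathrm{CT}+W$'', SignalClose$(x)$ ''if $\mathrm{CT}=$Deadline$(x)$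 then Dir:=close'', ClearDeadline$(x)$ ''if TrackStatus$(x)$=empty and Deadline$(x)<\infty$ then Deadline$(x):=\infty$'', together with SignalOpen ''if Dir=close and SafeToOpen then Dir:=open''. Executing a module means computing all updates it generates in the current state and performing them simultaneously (nothing happens if the update set is inconsistent). A module is enabled at a state if its update set is consistent and contains an update that changes the state. TrackStatus is external (changed only by the environment); Deadline, Dir, GateStatus are internal (changed only by the modules); other symbols are static. Runs: for $t\mapsto R(t)$, $t\in[0,\infty)$, let $\rho(t)$ be the reduct of $R(t)$ without CT. $R$ is a pre-run if all $R(t)$ share a superuniverse, $\mathrm{CT}=t$ in $R(t)$, and for every $\tau>0$ there are $0=t_0<\dots<t_n=\tau$ with $\rho$ constant on each $(t_i,t_{i+1})$. For a term $e$ (free variables fixed), $e_t$ is its value in $R(t)$, $e_{t+}$ (resp. $e_{t-}$, $t>0$) its constant value on some $(t,t+\epsilon)$ (resp. $(t-\epsilon,t)$); likewise $\rho(t\pm)$. $e$ holds over an interval if it holds at each point; $e$ becomes (is set to) $a$ at $t$ if $e_{t-}\ne a=e_t$ or $e_t\neq a=e_{t+}$. A pre-run is a run if (i) whenever $\rho(t+)\neq\rho(t)$, $\rho(t+)$ is the CT-free reduct of the result of executing some modules at $R(t)$ (these agents fire at $t$), with external functions equal in $\rho(t)$ and $\rho(t+)$; (ii) whenever $t>0$ and $\rho(t)\ne\rho(t-)$, they differ only in external functions. An agent is immediate if it fires at every moment it is enabled; bounded if immediate or there is $b>0$ with no interval $(t,t+b)$ over which it is enabled but never fires. Initial states: TrackStatus$(x)$=empty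 and Deadline$(x)=\infty$ for every track $x$. A regular run is a run $R$ with $R(0)$ initial such that: (Train Motion) for each track $x$ there is a finite or infinite sequence $0=t_0<t_1<t_2<\cdots$ (the significant moments of $x$) with TrackStatus$(x)$=empty over each $[t_{3i},t_{3i+1})$, =coming over each $[t_{3i+1},t_{3i+2})$ where $d_{min}\le t_{3i+2}-t_{3i+1}\le d_{max}$, =incrossing over each $[t_{3i+2},t_{3i+3})$, and, if the sequence is finite with last element $t_k$, then $3\mid k$ and TrackStatus$(x)$=empty over $[t_k,\infty)$; (Controller Timing) Controller is immediate; (Gate Timing) Gate is bounded, there is no interval $(t,t+d_{close})$ over which Dir=close and GateStatus=opened both hold, and no interval $(t,t+d_{open})$ over which Dir=open and GateStatus=closed both hold. *)

From Stdlib Require Import Reals Lra FinFun.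
Open Scope R_scope.

Inductive ExtR : Type := Fin (r : R) | Inf.

Definition ext_lt (r : R) (e : ExtR) : Prop :=
  match e with Fin d => r < d | Inf => True end.

Inductive TStat : Type := empty | coming | incrossing.
Inductive DirV : Type := open | close.
Inductive GStat : Type := opened | closed.

(** CT-free reduct of a state (the superuniverse, the reals and the static
    constants are fixed; CT is supplied separately as the time). *)
Record State (T : Type) : Type := mkState {
  TrackStatus : T -> TStat;
  Deadline : T -> ExtR;
  Dir : DirV;
  GateStatus : GStat }.
Arguments mkState {T}.
Arguments TrackStatus {T}.
Arguments Deadline {T}.
Arguments Dir {T}.
Arguments GateStatus {T}.

Inductive Loc (T : Type) : Type := LDeadline (x : T) | LDir | LGate.
Arguments LDeadline {T}.
Arguments LDir {T}.
Arguments LGate {T}.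
Inductive Val : Type := VExt (e : ExtR) | VDir (d : DirV) | VGate (g : GStat).

Definition Update (T : Type) : Type := (Loc T * Val)%type.
Definition UpdSet (T : Type) : Type := Update T -> Prop.

Definition get {T} (st : State T) (l : Loc T) : Val :=
  match l with
  | LDeadline x => VExt (Deadline st x)
  | LDir => VDir (Dir st)
  | LGate => VGate (GateStatus st)
  end.

Definition consistent {T} (U : UpdSet T) : Prop :=
  forall l v v', U (l, v) -> U (l, v') -> v = v'.

Section Program.
Context {T : Type} (dclose dopen dmin dmax : R).

Definition W : R := dmin - dclose.

Definition s_cond (ct : R) (st : State T) (x : T) : Prop :=
  TrackStatus st x = empty \/ ext_lt (ct + dopen) (Deadline st x).

Definition SafeToOpen (ct : R) (st : State T) : Prop :=
  forall x : T, s_cond ct st x.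

Definition SignalOpen_guard (ct : R) (st : State T) : Prop :=
  Dir st = close /\ SafeToOpen ct st.

Definition gate_upd (ct : R) (st : State T) : UpdSet T :=
  fun u =>
    (Dir st = open /\ u = (LGate, VGate opened)) \/
    (Dir st = close /\ u = (LGate, VGate closed)).

Definition ctrl_upd (ct : R) (st : State T) : UpdSet T :=
  fun u =>
    (* SetDeadline(x) *)
    (exists x, TrackStatus st x = coming /\ Deadline st x = Inf /\
               u = (LDeadline x, VExt (Fin (ct + W)))) \/
    (* SignalClose(x) *)
    (exists x, Deadline st x = Fin ct /\ u = (LDir, VDir close)) \/
    (* ClearDeadline(x) *)
    (exists x, TrackStatus st x = empty /\ Deadline st x <> Inf /\
               u = (LDeadline x, VExt Inf)) \/
    (SignalOpen_guard ct st /\ u = (LDir, VDir open)).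

Inductive Agent : Type := GateA | ControllerA.

Definition upd (a : Agent) : R -> State T -> UpdSet T :=
  match a with GateA => gate_upd | ControllerA => ctrl_upd end.

Definition enabled (a : Agent) (ct : R) (st : State T) : Prop :=
  consistent (upd a ct st) /\
  exists l v, upd a ct st (l, v) /\ get st l <> v.

Definition exec (S : Agent -> Prop) (ct : R) (st st' : State T) : Prop :=
  let U : UpdSet T := fun u =>
    exists a, S a /\ consistent (upd a ct st) /\ upd a ct st u in
  TrackStatus st' = TrackStatus st /\
  forall l : Loc T,
    (forall v, U (l, v) -> get st' l = v) /\
    ((forall v, ~ U (l, v)) -> get st' l = get st l).

(** Runs. [rho t] is the CT-free reduct of R(t); CT = t in R(t). Only t >= 0
    matters. *)
Variable rho : R -> State T.

Definition right_val {A : Type} (e : R -> A) (t : R) (a : A) : Prop :=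
  exists eps, 0 < eps /\ forall s, t < s < t + eps -> e s = a.
Definition left_val {A : Type} (e : R -> A) (t : R) (a : A) : Prop :=
  exists eps, 0 < eps /\ forall s, t - eps < s < t -> e s = a.

Definition becomes {A : Type} (e : R -> A) (t : R) (a : A) : Prop :=
  (exists b, left_val e t b /\ b <> a /\ e t = a) \/
  (e t <> a /\ right_val e t a).

Definition becomes_true (P : R -> Prop) (t : R) : Prop :=
  ((exists eps, 0 < eps /\ forall s, t - eps < s < t -> ~ P s) /\ P t) \/
  (~ P t /\ exists eps, 0 < eps /\ forall s, t < s < t + eps -> P s).

Definition pre_run : Prop :=
  forall tau, 0 < tau ->
    exists (n : nat) (ts : nat -> R),
      ts O = 0 /\ ts n = tau /\
      (forall i, (i < n)%nat -> ts i < ts (S i)) /\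
      (forall i, (i < n)%nat -> forall s s',
          ts i < s < ts (S i) -> ts i < s' < ts (S i) -> rho s = rho s').

Definition fires (a : Agent) (t : R) : Prop :=
  exists (S : Agent -> Prop) (sg : State T),
    S a /\ right_val rho t sg /\ sg <> rho t /\ exec S t (rho t) sg.

Definition is_run : Prop :=
  pre_run /\
  (forall t sg, 0 <= t -> right_val rho t sg -> sg <> rho t ->
     exists S : Agent -> Prop, exec S t (rho t) sg) /\
  (forall t sg, 0 < t -> left_val rho t sg -> rho t <> sg ->
     Deadline (rho t) = Deadline sg /\ Dir (rho t) = Dir sg /\
     GateStatus (rho t) = GateStatus sg).

Definition immediate (a : Agent) : Prop :=
  forall t, 0 <= t -> enabled a t (rho t) -> fires a t.

Definition bounded (a : Agent) : Prop :=
  immediate a \/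
  exists b, 0 < b /\
    ~ (exists t, 0 <= t /\
         (forall s, t < s < t + b -> enabled a s (rho s)) /\
         (forall s, t < s < t + b -> ~ fires a s)).

Definition initial (st : State T) : Prop :=
  forall x, TrackStatus st x = empty /\ Deadline st x = Inf.

(** index i belongs to the (finite, with last index k, or infinite) sequence *)
Definition in_range (N : option nat) (i : nat) : Prop :=
  match N with None => True | Some k => (i <= k)%nat end.

Definition train_motion (x : T) : Prop :=
  exists (N : option nat) (ts : nat -> R),
    ts O = 0 /\
    (forall i, in_range N (S i) -> ts i < ts (S i)) /\
    (forall i s, in_range N (3 * i + 1) ->
       ts (3 * i)%nat <= s < ts (3 * i + 1)%nat -> TrackStatus (rho s) x = empty) /\
    (forall i, in_range N (3 * i + 2) ->
       (forall s, ts (3 * i + 1)%nat <= s < ts (3 * i + 2)%nat ->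
          TrackStatus (rho s) x = coming) /\
       dmin <= ts (3 * i + 2)%nat - ts (3 * i + 1)%nat <= dmax) /\
    (forall i s, in_range N (3 * i + 3) ->
       ts (3 * i + 2)%nat <= s < ts (3 * i + 3)%nat ->
       TrackStatus (rho s) x = incrossing) /\
    (match N with
     | None => True
     | Some k => Nat.modulo k 3 = O /\
                 forall s, ts k <= s -> TrackStatus (rho s) x = empty
     end).

Definition regular_run : Prop :=
  is_run /\ initial (rho 0) /\
  (forall x, train_motion x) /\
  immediate ControllerA /\
  bounded GateA /\
  ~ (exists t, 0 <= t /\ forall s, t < s < t + dclose ->
        Dir (rho s) = close /\ GateStatus (rho s) = opened) /\
  ~ (exists t, 0 <= t /\ forall s, t < s < t + dopen ->
        Dir (rho s) = open /\ GateStatus (rho s) = closed).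

Definition SignalOpen_fires (t : R) : Prop :=
  fires ControllerA t /\ SignalOpen_guard t (rho t).

End Program.

From Stdlib Require Import Reals FinFun Lra Lia Classical List.
Open Scope R_scope.

(** A run is piecewise constant and the Controller is immediate, so a
    Controller rule cannot stay enabled on an interval (its guard is stable away
    from the finitely many deadlines). Hence if the guard of SignalOpen holds at
    [t] then SafeToOpen failed just before [t], Dir being internal and thus
    continuous from the left. SafeToOpen cannot instead be lost at [t] and
    regained after it, since a deadline only leaves [∞] on a coming track and
    returns to [∞] on an empty one.

    Conversely, when SafeToOpen becomes true at [t] while deadlines do not jump
    from the left, some track [x] becomes empty at [t]: a train leaves the
    crossing. An invariant on deadlines along the phases of [x], proved by real
    induction, shows that the deadline set [W] after [x] started coming fell
    before the train entered the crossing, where SignalClose set Dir to close;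
    SignalOpen could not reopen while [x] was still unsafe, so Dir = close at
    [t]. The same invariant
    shows that no deadline equals [t] when SafeToOpen holds, so the update set
    of the Controller is consistent and SignalOpen fires. *)

Lemma real_interval_induction (P : R -> Prop) (a b : R) :
  a <= b -> P a ->
  (forall s, a <= s < b -> P s -> exists e, 0 < e /\ forall u, s < u < s + e -> P u) ->
  (forall s, a < s <= b -> (exists e, 0 < e /\ forall u, s - e < u < s -> P u) -> P s) ->
  forall s, a <= s <= b -> P s.
Proof.
  intros Hab Pa Hright Hleft.
  set (E := fun s => a <= s <= b /\ forall u, a <= u <= s -> P u).
  assert (Ea : E a).
  { split; [lra|]. intros u Hu. replace u with a by lra. exact Pa. }
  assert (HbE : bound E) by (exists b; intros y [Hy _]; lra).
  destruct (completeness E HbE (ex_intro _ a Ea)) as [m [Hub Hlub]].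
  assert (Ham : a <= m) by (apply Hub; exact Ea).
  assert (Hmb : m <= b) by (apply Hlub; intros y [Hy _]; lra).
  assert (below_m : forall u, a <= u < m -> P u).
  { intros u Hu. apply NNPP. intro HnP.
    enough (m <= u) by lra.
    apply Hlub. intros y [_ Hy]. destruct (Rle_or_lt y u) as [|Hyu]; auto.
    exfalso. apply HnP, Hy. lra. }
  assert (Pm : P m).
  { destruct (Req_dec m a) as [->|Hne]; [exact Pa|].
    apply Hleft; [lra|]. exists (m - a). split; [lra|]. intros u Hu. apply below_m. lra. }
  assert (Em : E m).
  { split; [lra|]. intros u Hu.
    destruct (Req_dec u m) as [->|]; [exact Pm|]. apply below_m; lra. }
  assert (m = b) as ->.
  { destruct (Req_dec m b) as [|Hne]; auto. exfalso.
    destruct (Hright m ltac:(lra) Pm) as [e [He Hu]].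
    set (m' := m + Rmin e (b - m) / 2).
    pose proof (Rmin_l e (b - m)); pose proof (Rmin_r e (b - m)).
    assert (0 < Rmin e (b - m)) by (apply Rmin_pos; lra).
    assert (E m').
    { unfold m'; split; [lra|]. intros u Hu'. destruct (Rle_or_lt u m).
      - apply Em. lra.
      - apply Hu. lra. }
    assert (m' <= m) by (apply Hub; auto). unfold m' in *. lra. }
  intros s Hs. apply Em. lra.
Qed.

Lemma exists_between_notin (L : list R) (a b : R) :
  a < b -> exists u, a < u < b /\ ~ In u L.
Proof.
  revert a b. induction L as [|r L IH]; intros a b Hab.
  - exists ((a + b) / 2). split; [lra|]. intros [].
  - destruct (classic (a < r < b)) as [Hr|Hr].
    + destruct (IH a r) as [u [Hu Hn]]; [lra|]. exists u.
      split; [lra|]. intros [E|E]; [lra|auto].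
    + destruct (IH a b Hab) as [u [Hu Hn]]. exists u.
      split; [lra|]. intros [E|E]; [apply Hr; lra|auto].
Qed.

Lemma exists_between_avoiding {T : Type} (HT : Finite T) (f : T -> ExtR) (a b : R) :
  a < b -> exists u, a < u < b /\ forall y, f y <> Fin u.
Proof.
  intros Hab. destruct HT as [l Hl].
  set (g := fun y => match f y with Fin r => r | Inf => a end).
  destruct (exists_between_notin (map g l) a b Hab) as [u [Hu Hn]].
  exists u. split; auto. intros y Hy. apply Hn.
  replace u with (g y) by (unfold g; rewrite Hy; reflexivity).
  apply in_map, Hl.
Qed.

Lemma exists_left_near (c t e1 e2 : R) :
  c < t -> 0 < e1 -> 0 < e2 -> exists u, c < u < t /\ t - e1 < u /\ t - e2 < u.
Proof.
  intros Hc He1 He2. set (m := Rmax c (Rmax (t - e1) (t - e2))).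
  assert (m < t) by (apply Rmax_lub_lt; [lra|apply Rmax_lub_lt; lra]).
  pose proof (Rmax_l c (Rmax (t - e1) (t - e2))); pose proof (Rmax_r c (Rmax (t - e1) (t - e2))).
  pose proof (Rmax_l (t - e1) (t - e2)); pose proof (Rmax_r (t - e1) (t - e2)).
  exists ((m + t) / 2). unfold m in *. lra.
Qed.

Lemma exists_right_near (t e1 e2 : R) :
  0 < e1 -> 0 < e2 -> exists u, t < u < t + e1 /\ u < t + e2.
Proof.
  intros He1 He2. exists (t + Rmin e1 e2 / 2).
  pose proof (Rmin_l e1 e2); pose proof (Rmin_r e1 e2); pose proof (Rmin_glb_lt e1 e2 0 He1 He2).
  lra.
Qed.

Lemma exists_step_containing (ts : nat -> R) (s : R) (n : nat) :
  ts O <= s < ts n -> (forall i, (i < n)%nat -> ts i < ts (S i)) ->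
  exists i, (i < n)%nat /\ ts i <= s < ts (S i).
Proof.
  induction n as [|n IH]; intros Hs Hinc; [lra|].
  destruct (Rlt_or_le s (ts n)).
  - destruct IH as [i [Hi Hi']]; [lra|auto|]. exists i. split; auto.
  - exists n. split; [lia|lra].
Qed.

Lemma right_val_unique {A : Type} (f : R -> A) (t : R) (a b : A) :
  right_val f t a -> right_val f t b -> a = b.
Proof.
  intros [e1 [He1 H1]] [e2 [He2 H2]].
  destruct (exists_right_near t e1 e2 He1 He2) as [u [Hu1 Hu2]].
  rewrite <- (H1 u), (H2 u); auto; lra.
Qed.

Lemma nat_mod3_cases (k : nat) :
  exists i, k = (3 * i)%nat \/ k = (3 * i + 1)%nat \/ k = (3 * i + 2)%nat.
Proof.
  exists (k / 3)%nat.
  pose proof (Nat.div_mod_eq k 3); pose proof (Nat.mod_upper_bound k 3). lia.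
Qed.

Section RegularRun.

Variables (T : Type) (HT : Finite T) (dclose dopen dmin dmax : R).
Hypotheses (Hclose : 0 < dclose) (Hopen : 0 < dopen) (Hmin : 0 < dmin)
  (Hcm : dclose < dmin).
Variable rho : R -> State T.
Hypothesis Hreg : regular_run dclose dopen dmin dmax rho.

Local Notation guard t := (SignalOpen_guard dopen t (rho t)).
Local Notation safe t := (SafeToOpen dopen t (rho t)).
Local Notation fires := (fires dclose dopen dmin rho).
Local Notation ctrl_upd := (ctrl_upd dclose dopen dmin).
Local Notation exec := (exec dclose dopen dmin).
Local Notation Wd := (W dclose dmin).

Lemma left_val_exists (t : R) : 0 < t -> exists sl, left_val rho t sl.
Proof.
  intros Ht. destruct Hreg as [[Hpre _] _].
  destruct (Hpre t Ht) as [[|m] [ts [H0 [Hn [Hinc Hc]]]]]; [lra|].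
  pose proof (Hinc m ltac:(lia)) as Hm. rewrite Hn in Hm.
  exists (rho ((ts m + t) / 2)), (t - ts m). split; [lra|].
  intros s Hs. apply (Hc m); [lia| |]; rewrite Hn; lra.
Qed.

Lemma right_val_exists (t : R) : 0 <= t -> exists sr, right_val rho t sr.
Proof.
  intros Ht. destruct Hreg as [[Hpre _] _].
  destruct (Hpre (t + 1)) as [n [ts [H0 [Hn [Hinc Hc]]]]]; [lra|].
  destruct (exists_step_containing ts t n) as [i [Hi Hi']]; [lra|auto|].
  exists (rho ((t + ts (S i)) / 2)), (ts (S i) - t). split; [lra|].
  intros s Hs. apply (Hc i Hi); lra.
Qed.

Lemma left_val_internal (t : R) (sl : State T) : 0 < t -> left_val rho t sl ->
  Deadline (rho t) = Deadline sl /\ Dir (rho t) = Dir sl.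
Proof.
  intros Ht Hl. destruct (classic (rho t = sl)) as [->|Hne]; [auto|].
  destruct Hreg as [[_ [_ Hint]] _].
  destruct (Hint t sl Ht Hl Hne) as [? [? _]]; auto.
Qed.

Lemma not_fires_on_constant (a b : R) (st : State T) (u : R) (ag : Agent) :
  (forall s, a < s < b -> rho s = st) -> a < u < b -> ~ fires ag u.
Proof.
  intros Hc Hu [S [sr [_ [[e [He Hr]] [Hne _]]]]].
  destruct (exists_right_near u e (b - u)) as [v [Hv1 Hv2]]; [lra|lra|].
  apply Hne. rewrite <- (Hr v), (Hc v), (Hc u); auto; lra.
Qed.

Lemma controller_fires_when_enabled (t : R) :
  0 <= t -> enabled dclose dopen dmin ControllerA t (rho t) -> fires ControllerA t.
Proof. destruct Hreg as [_ [_ [_ [Himm _]]]]. apply Himm. Qed.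

Lemma ctrl_upd_consistent (ct : R) (st : State T) :
  (forall y, Deadline st y <> Fin ct) \/ ~ SignalOpen_guard dopen ct st ->
  consistent (ctrl_upd ct st).
Proof.
  intros Hc l v v' H1 H2.
  destruct H1 as [[x [A1 [A2 E1]]]|[[x [A1 E1]]|[[x [A1 [A2 E1]]]|[G1 E1]]]];
  destruct H2 as [[y [B1 [B2 E2]]]|[[y [B1 E2]]|[[y [B1 [B2 E2]]]|[G2 E2]]]];
  inversion E1; subst; inversion E2; subst; auto; try congruence;
  destruct Hc as [Hc|Hc]; exfalso; solve [eapply Hc; eauto | apply Hc; auto].
Qed.

(** The Controller is immediate but cannot fire where the run is constant. *)
Lemma deadlines_settled_on_constant (a b : R) (st : State T) :
  0 <= a < b -> (forall s, a < s < b -> rho s = st) -> forall x,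
  (TrackStatus st x = empty -> Deadline st x = Inf) /\
  (TrackStatus st x = coming -> Deadline st x <> Inf).
Proof.
  intros Hab Hc x.
  destruct (exists_between_avoiding HT (Deadline st) a b) as [u [Hu Hav]]; [lra|].
  assert (Hcons : consistent (ctrl_upd u st)) by (apply ctrl_upd_consistent; left; auto).
  assert (Hru : rho u = st) by (apply Hc; lra).
  assert (Henabled : forall l v, ctrl_upd u st (l, v) -> get st l <> v -> False).
  { intros l v Hup Hch. apply (not_fires_on_constant a b st u ControllerA Hc Hu).
    apply controller_fires_when_enabled; [lra|]. rewrite Hru.
    split; [exact Hcons|]. exists l, v. auto. }
  split; intros Hstat; apply NNPP; intro Hd.
  - apply (Henabled (LDeadline x) (VExt Inf)).
    + right; right; left. exists x. auto.
    + simpl. congruence.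
  - apply (Henabled (LDeadline x) (VExt (Fin (u + Wd)))).
    + left. exists x. split; auto. split; [apply NNPP; auto|auto].
    + simpl. intro E. inversion E. apply Hd. congruence.
Qed.

Definition deadline_transition (ct : R) (st st' : State T) (x : T) : Prop :=
  Deadline st' x = Deadline st x \/
  (TrackStatus st x = coming /\ Deadline st x = Inf /\ Deadline st' x = Fin (ct + Wd)) \/
  (TrackStatus st x = empty /\ Deadline st' x = Inf).

Lemma exec_get (S : Agent -> Prop) (ct : R) (st st' : State T) (l : Loc T) :
  exec S ct st st' ->
  get st' l = get st l \/ exists a, upd dclose dopen dmin a ct st (l, get st' l).
Proof.
  intros [_ Hl]. destruct (Hl l) as [Hu Hn].
  destruct (classic (exists v a, S a /\ consistent (upd dclose dopen dmin a ct st) /\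
                                 upd dclose dopen dmin a ct st (l, v)))
    as [[v [a [Sa [Ca Ua]]]]|Hno].
  - right. exists a. rewrite (Hu v); eauto.
  - left. apply Hn. intros v Hv. apply Hno. eauto.
Qed.

Lemma exec_deadline (S : Agent -> Prop) (ct : R) (st st' : State T) (x : T) :
  exec S ct st st' -> deadline_transition ct st st' x.
Proof.
  intros Hex. destruct (exec_get S ct st st' (LDeadline x) Hex) as [E|[[] U]]; simpl in *.
  - left. congruence.
  - destruct U as [[_ E]|[_ E]]; discriminate.
  - destruct U as [[y [A1 [A2 E]]]|[[y [_ E]]|[[y [A1 [_ E]]]|[_ E]]]];
      inversion E; subst; unfold deadline_transition; auto.
Qed.

Lemma exec_dir_open (S : Agent -> Prop) (ct : R) (st st' : State T) :
  exec S ct st st' -> Dir st' = open -> Dir st = open \/ SignalOpen_guard dopen ct st.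
Proof.
  intros Hex Ho. destruct (exec_get S ct st st' LDir Hex) as [E|[[] U]]; simpl in *.
  - left. congruence.
  - destruct U as [[_ E]|[_ E]]; discriminate.
  - rewrite Ho in U.
    destruct U as [[y [_ [_ E]]]|[[y [_ E]]|[[y [_ [_ E]]]|[G _]]]]; auto; discriminate.
Qed.

Lemma right_val_effects (t : R) (sr : State T) : 0 <= t -> right_val rho t sr ->
  TrackStatus sr = TrackStatus (rho t) /\
  (forall x, deadline_transition t (rho t) sr x) /\
  (Dir sr = open -> Dir (rho t) = open \/ guard t).
Proof.
  intros Ht Hr. destruct (classic (sr = rho t)) as [->|Hne].
  - split; [reflexivity|]. split; [intros x; left; reflexivity|auto].
  - destruct Hreg as [[_ [Hstep _]] _]. destruct (Hstep t sr Ht Hr Hne) as [S HS].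
    split; [apply HS|]. split.
    + intros x. exact (exec_deadline S t _ _ x HS).
    + exact (exec_dir_open S t _ _ HS).
Qed.

Lemma dir_stays_close (t : R) (sr : State T) : 0 <= t ->
  Dir (rho t) = close -> ~ guard t -> right_val rho t sr -> Dir sr = close.
Proof.
  intros Ht Hc Hg Hsr.
  destruct (Dir sr) eqn:Ed; [exfalso|reflexivity].
  destruct (proj2 (proj2 (right_val_effects t sr Ht Hsr)) Ed); [congruence|auto].
Qed.

Lemma dir_close_after_deadline (t : R) (y : T) (sr : State T) : 0 <= t ->
  Deadline (rho t) y = Fin t -> ~ guard t -> right_val rho t sr -> Dir sr = close.
Proof.
  intros Ht Hy Hg Hsr.
  destruct (Dir (rho t)) eqn:Ed; [|exact (dir_stays_close t sr Ht Ed Hg Hsr)].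
  assert (Hcons : consistent (ctrl_upd t (rho t))) by (apply ctrl_upd_consistent; right; auto).
  assert (Hclose_upd : ctrl_upd t (rho t) (LDir, VDir close)) by (right; left; exists y; auto).
  destruct (controller_fires_when_enabled t Ht) as [S [sr' [HS [Hsr' [_ [_ Hl]]]]]].
  { split; [exact Hcons|]. exists LDir, (VDir close). split; [auto|]. simpl. congruence. }
  rewrite (right_val_unique _ _ _ _ Hsr' Hsr) in Hl.
  assert (G : get sr LDir = VDir close).
  { apply (proj1 (Hl LDir)). exists ControllerA. auto. }
  simpl in G. congruence.
Qed.

Definition phases (x : T) (N : option nat) (ts : nat -> R) : Prop :=
  ts O = 0 /\
  (forall i, in_range N (S i) -> ts i < ts (S i)) /\
  (forall i s, in_range N (3 * i + 1) ->
     ts (3 * i)%nat <= s < ts (3 * i + 1)%nat -> TrackStatus (rho s) x = empty) /\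
  (forall i, in_range N (3 * i + 2) ->
     (forall s, ts (3 * i + 1)%nat <= s < ts (3 * i + 2)%nat ->
        TrackStatus (rho s) x = coming) /\
     dmin <= ts (3 * i + 2)%nat - ts (3 * i + 1)%nat <= dmax) /\
  (forall i s, in_range N (3 * i + 3) ->
     ts (3 * i + 2)%nat <= s < ts (3 * i + 3)%nat ->
     TrackStatus (rho s) x = incrossing) /\
  (match N with
   | None => True
   | Some k => Nat.modulo k 3 = O /\
               forall s, ts k <= s -> TrackStatus (rho s) x = empty
   end).

Lemma phases_exist (x : T) : exists N ts, phases x N ts.
Proof. destruct Hreg as [_ [_ [Htm _]]]. exact (Htm x). Qed.

Lemma in_range_le (N : option nat) (i j : nat) : in_range N j -> (i <= j)%nat -> in_range N i.
Proof. destruct N; simpl; lia. Qed.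

Definition in_phase (N : option nat) (ts : nat -> R) (k : nat) (s : R) : Prop :=
  in_range N k /\ ts k <= s /\ (in_range N (S k) -> s < ts (S k)).

Section Track.

Variables (x : T) (N : option nat) (ts : nat -> R).
Hypothesis Hph : phases x N ts.

Lemma ts_lt (i j : nat) : in_range N j -> (i < j)%nat -> ts i < ts j.
Proof.
  destruct Hph as [_ [Hinc _]]. revert i.
  induction j as [|j IH]; intros i Hr Hij; [lia|].
  pose proof (Hinc j Hr).
  destruct (Nat.eq_dec i j) as [->|]; [auto|].
  enough (ts i < ts j) by lra. apply IH; [eapply in_range_le; eauto|lia].
Qed.

Lemma ts_le (i j : nat) : in_range N j -> (i <= j)%nat -> ts i <= ts j.
Proof.
  intros Hr Hij. destruct (Nat.eq_dec i j) as [->|]; [lra|].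
  left. apply ts_lt; auto; lia.
Qed.

Lemma ts_ge0 (j : nat) : in_range N j -> 0 <= ts j.
Proof. intros Hr. destruct Hph as [H0 _]. rewrite <- H0. apply ts_le; auto; lia. Qed.

Lemma deadline_before_crossing (i : nat) :
  in_range N (3 * i + 2) -> ts (3 * i + 1)%nat + Wd < ts (3 * i + 2)%nat.
Proof.
  intros Hr. destruct Hph as [_ [_ [_ [Hc _]]]]. destruct (Hc i Hr) as [_ D].
  unfold W. lra.
Qed.

Lemma crossing_ends_after_deadline (j : nat) :
  in_range N (3 * j + 3) -> ts (3 * j + 1)%nat + Wd < ts (3 * j + 3)%nat.
Proof.
  intros Hr. pose proof (deadline_before_crossing j (in_range_le N (3 * j + 2) _ Hr ltac:(lia))).
  enough (ts (3 * j + 2)%nat < ts (3 * j + 3)%nat) by lra.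
  apply ts_lt; auto; lia.
Qed.

Lemma ts_lower_bound (i : nat) : in_range N (3 * i) -> INR i * dmin <= ts (3 * i)%nat.
Proof.
  induction i as [|i IH]; intros Hr.
  - destruct Hph as [H0 _]. simpl. rewrite H0. lra.
  - rewrite S_INR.
    pose proof (IH (in_range_le N (3 * i) _ Hr ltac:(lia))).
    destruct Hph as [_ [_ [_ [Hc _]]]].
    destruct (Hc i (in_range_le N (3 * i + 2) _ Hr ltac:(lia))) as [_ D].
    assert (ts (3 * i)%nat <= ts (3 * i + 1)%nat)
      by (apply ts_le; [eapply in_range_le; eauto|]; lia).
    assert (ts (3 * i + 2)%nat <= ts (3 * S i)%nat) by (apply ts_le; auto; lia).
    lra.
Qed.

Lemma in_phase_unique (k k' : nat) (s : R) : in_phase N ts k s -> in_phase N ts k' s -> k = k'.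
Proof.
  intros [A1 [A2 A3]] [B1 [B2 B3]].
  destruct (Nat.lt_total k k') as [H|[H|H]]; auto; exfalso.
  - assert (s < ts (S k)) by (apply A3; apply (in_range_le N _ k' B1); lia).
    assert (ts (S k) <= ts k') by (apply ts_le; auto). lra.
  - assert (s < ts (S k')) by (apply B3; apply (in_range_le N _ k A1); lia).
    assert (ts (S k') <= ts k) by (apply ts_le; auto). lra.
Qed.

Lemma in_phase_exists (s : R) : 0 <= s -> exists k, in_phase N ts k s.
Proof.
  intros Hs. pose proof Hph as [H0 [Hinc _]]. pose proof ts_lower_bound as Hlow.
  destruct N as [K|] eqn:EN.
  - destruct (Rle_or_lt (ts K) s).
    + exists K. split; [simpl; lia|]. split; [auto|simpl; lia].
    + destruct (exists_step_containing ts s K) as [i [Hi Hi']]; [lra| |].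
      { intros i Hi. apply Hinc. simpl; lia. }
      exists i. split; [simpl; lia|]. split; [lra|]. intros; lra.
  - destruct (INR_unbounded (s / dmin)) as [n Hn].
    assert (s < INR n * dmin).
    { apply Rmult_gt_compat_r with (r := dmin) in Hn; auto.
      unfold Rdiv in Hn. rewrite Rmult_assoc, Rinv_l in Hn; lra. }
    pose proof (Hlow n I).
    destruct (exists_step_containing ts s (3 * n)) as [i [Hi Hi']]; [lra| |].
    { intros i Hi. apply Hinc. exact I. }
    exists i. split; [exact I|]. split; [lra|]. intros; lra.
Qed.

Lemma in_range_after_coming (i : nat) : in_range N (3 * i + 1) -> in_range N (3 * i + 3).
Proof.
  destruct Hph as [_ [_ [_ [_ [_ Hfin]]]]].
  destruct N as [K|]; simpl; [|auto]. destruct Hfin as [Hm _].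
  apply Nat.Div0.mod_divides in Hm as [q ->]. lia.
Qed.

Lemma status_in_phase (k : nat) (s : R) : in_phase N ts k s ->
  (forall i, k = (3 * i)%nat -> TrackStatus (rho s) x = empty) /\
  (forall i, k = (3 * i + 1)%nat -> TrackStatus (rho s) x = coming) /\
  (forall i, k = (3 * i + 2)%nat -> TrackStatus (rho s) x = incrossing).
Proof.
  intros [Hr [Hl Hu]]. destruct Hph as [_ [_ [He [Hc [Hx Hfin]]]]].
  split; [|split]; intros i ->.
  - destruct (classic (in_range N (3 * i + 1))) as [Hr'|Hr'].
    + apply (He i s Hr'). replace (3 * i + 1)%nat with (S (3 * i)) in * by lia. auto.
    + destruct N as [K|]; simpl in *; [|tauto]. destruct Hfin as [_ Hf].
      apply Hf. now replace K with (3 * i)%nat by lia.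
  - assert (Hr' : in_range N (3 * i + 2))
      by (apply (in_range_le N _ (3 * i + 3)); [apply in_range_after_coming; auto|lia]).
    apply (proj1 (Hc i Hr')).
    replace (3 * i + 2)%nat with (S (3 * i + 1)) in * by lia. auto.
  - assert (Hr' : in_range N (3 * i + 3)).
    { apply in_range_after_coming. apply (in_range_le N _ _ Hr). lia. }
    apply (Hx i s Hr').
    replace (3 * i + 3)%nat with (S (3 * i + 2)) in * by lia. auto.
Qed.

(** The deadline of [x] is set [W] after the train starts coming; it is cleared
    only just after the train leaves the crossing, since ClearDeadline fires at
    the exit time itself. *)
Definition deadline_inv (s : R) : Prop := forall k, in_phase N ts k s ->
  (forall i, k = (3 * i)%nat -> Deadline (rho s) x = Inf \/
     exists j, i = S j /\ s = ts k /\ Deadline (rho s) x = Fin (ts (3 * j + 1)%nat + Wd)) /\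
  (forall i, k = (3 * i + 1)%nat ->
     (s = ts k /\ Deadline (rho s) x = Inf) \/
     (ts k < s /\ Deadline (rho s) x = Fin (ts k + Wd))) /\
  (forall i, k = (3 * i + 2)%nat -> Deadline (rho s) x = Fin (ts (3 * i + 1)%nat + Wd)).

Lemma deadline_inv0 : deadline_inv 0.
Proof.
  intros k [Hr [Hl _]].
  assert (k = O) as ->.
  { destruct k as [|k]; [auto|]. pose proof (ts_lt O (S k) Hr ltac:(lia)).
    destruct Hph as [H0 _]. lra. }
  destruct Hreg as [_ [Hinit _]].
  split; [|split]; intros i Hi; try lia. left. apply Hinit.
Qed.

Lemma deadline_inv_right (s : R) : 0 <= s -> deadline_inv s ->
  exists e, 0 < e /\ forall u, s < u < s + e -> deadline_inv u.
Proof.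
  intros Hs HQ.
  destruct (in_phase_exists s Hs) as [k0 Hk0].
  destruct (right_val_exists s Hs) as [sr Hsr]. pose proof Hsr as [e0 [He0 Hc]].
  assert (He : exists e, 0 < e /\ e <= e0 /\ (in_range N (S k0) -> s + e <= ts (S k0))).
  { destruct (classic (in_range N (S k0))) as [Hr|Hr].
    - pose proof (proj2 (proj2 Hk0) Hr).
      exists (Rmin e0 (ts (S k0) - s)). split; [apply Rmin_pos; lra|].
      split; [apply Rmin_l|]. intros _. pose proof (Rmin_r e0 (ts (S k0) - s)). lra.
    - exists e0. split; [auto|]. split; [lra|tauto]. }
  destruct He as [e [He [Hee Hes]]].
  exists e. split; [auto|]. intros u Hu k Hk.
  assert (Hk0u : in_phase N ts k0 u).
  { destruct Hk0 as [H1 [H2 H3]]. split; [auto|]. split; [lra|].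
    intros Hr. specialize (Hes Hr). lra. }
  rewrite <- (in_phase_unique _ _ _ Hk0u Hk), (Hc u) by lra.
  destruct (right_val_effects s sr Hs Hsr) as [HTS [HD _]].
  destruct (deadlines_settled_on_constant s (s + e) sr ltac:(lra)
              ltac:(intros v Hv; apply Hc; lra) x) as [Hempty Hcoming].
  rewrite HTS in Hempty, Hcoming.
  destruct (status_in_phase k0 s Hk0) as [S1 [S2 S3]].
  destruct (HQ k0 Hk0) as [Q1 [Q2 Q3]].
  split; [|split]; intros i Hi.
  - left. exact (Hempty (S1 i Hi)).
  - specialize (S2 i Hi). right. split; [destruct Hk0 as [_ [? _]]; lra|].
    destruct (HD x) as [D|[[_ [Dinf D]]|[D _]]]; [| |congruence].
    + destruct (Q2 i Hi) as [[_ A]|[_ A]]; [|congruence].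
      exfalso. apply (Hcoming S2). congruence.
    + destruct (Q2 i Hi) as [[A _]|[_ A]]; [rewrite D, A; reflexivity|congruence].
  - specialize (S3 i Hi).
    destruct (HD x) as [D|[[D _]|[D _]]]; [rewrite D; apply Q3; auto|congruence..].
Qed.

Lemma deadline_inv_left (s : R) : 0 < s ->
  (exists e, 0 < e /\ forall u, s - e < u < s -> deadline_inv u) -> deadline_inv s.
Proof.
  intros Hs [e1 [He1 HQ]] k Hk.
  destruct (left_val_exists s Hs) as [sl Hsl]. pose proof Hsl as [e0 [He0 Hc]].
  rewrite (proj1 (left_val_internal s sl Hs Hsl)).
  pose proof Hk as [Hr [[Hlt|Heq] Hu]].
  - destruct (exists_left_near (ts k) s e0 e1) as [u [Hu1 [Hu2 Hu3]]]; [lra|lra|lra|].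
    assert (Hku : in_phase N ts k u).
    { split; [auto|]. split; [lra|]. intros Hr'. specialize (Hu Hr'). lra. }
    destruct (HQ u ltac:(lra) k Hku) as [Q1 [Q2 Q3]].
    rewrite (Hc u) in Q1, Q2, Q3 by lra.
    split; [|split]; intros i Hi.
    + destruct (Q1 i Hi) as [A|[j [_ [A _]]]]; [auto|lra].
    + destruct (Q2 i Hi) as [[A _]|[_ A]]; [lra|]. right. auto.
    + apply Q3; auto.
  - destruct k as [|k'].
    { destruct Hph as [H0 _]. lra. }
    assert (Hlt : ts k' < ts (S k')) by (apply ts_lt; auto).
    destruct (exists_left_near (ts k') s e0 e1) as [u [Hu1 [Hu2 Hu3]]]; [lra|lra|lra|].
    assert (Hku : in_phase N ts k' u).
    { split; [apply (in_range_le N k' (S k')); auto|]. split; [lra|]. intros _. lra. }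
    destruct (HQ u ltac:(lra) k' Hku) as [Q1 [Q2 Q3]].
    rewrite (Hc u) in Q1, Q2, Q3 by lra.
    split; [|split]; intros i Hi.
    + destruct i as [|j]; [lia|]. right. exists j. split; [auto|]. split; [auto|].
      apply (Q3 j). lia.
    + left. split; [auto|]. destruct (Q1 i ltac:(lia)) as [A|[j [_ [A _]]]]; [auto|lra].
    + destruct (Q2 i ltac:(lia)) as [[A _]|[_ A]]; [lra|].
      replace (ts (3 * i + 1)%nat) with (ts k') by (f_equal; lia). exact A.
Qed.

Lemma deadline_invariant (s : R) : 0 <= s -> deadline_inv s.
Proof.
  intros Hs. apply (real_interval_induction deadline_inv 0 s); auto; [| | |lra].
  - exact deadline_inv0.
  - intros v Hv HQ. apply deadline_inv_right; auto; lra.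
  - intros v Hv HQ. apply deadline_inv_left; auto; lra.
Qed.

Lemma deadline_pending (j : nat) (s : R) : in_range N (3 * j + 3) ->
  ts (3 * j + 1)%nat + Wd <= s < ts (3 * j + 3)%nat ->
  TrackStatus (rho s) x <> empty /\ Deadline (rho s) x = Fin (ts (3 * j + 1)%nat + Wd).
Proof.
  intros Hr Hs.
  assert (Hr2 : in_range N (3 * j + 2)) by (apply (in_range_le N _ _ Hr); lia).
  assert (Hr1 : in_range N (3 * j + 1)) by (apply (in_range_le N _ _ Hr); lia).
  pose proof (deadline_before_crossing j Hr2).
  assert (0 < Wd) by (unfold W; lra).
  assert (Hs0 : 0 <= s) by (pose proof (ts_ge0 _ Hr1); lra).
  destruct (Rlt_or_le s (ts (3 * j + 2)%nat)).
  - assert (Hc : in_phase N ts (3 * j + 1) s).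
    { split; [auto|]. split; [lra|]. now replace (S (3 * j + 1)) with (3 * j + 2)%nat by lia. }
    split.
    + rewrite (proj1 (proj2 (status_in_phase _ _ Hc)) j eq_refl). discriminate.
    + destruct (proj1 (proj2 (deadline_invariant s Hs0 _ Hc)) j eq_refl) as [[A _]|[_ A]];
        [lra|exact A].
  - assert (Hc : in_phase N ts (3 * j + 2) s).
    { split; [auto|]. split; [lra|]. now replace (S (3 * j + 2)) with (3 * j + 3)%nat by lia. }
    split.
    + rewrite (proj2 (proj2 (status_in_phase _ _ Hc)) j eq_refl). discriminate.
    + exact (proj2 (proj2 (deadline_invariant s Hs0 _ Hc)) j eq_refl).
Qed.

Lemma dir_close_until_exit (j : nat) (s : R) : in_range N (3 * j + 3) ->
  ts (3 * j + 1)%nat + Wd < s <= ts (3 * j + 3)%nat -> Dir (rho s) = close.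
Proof.
  intros Hr Hs.
  set (d := ts (3 * j + 1)%nat + Wd). set (e := ts (3 * j + 3)%nat).
  pose proof (crossing_ends_after_deadline j Hr).
  assert (0 < Wd) by (unfold W; lra).
  assert (0 <= ts (3 * j + 1)%nat) by (apply ts_ge0, (in_range_le N _ _ Hr); lia).
  assert (no_guard : forall v, d <= v < e -> ~ guard v).
  { intros v Hv [_ Hsafe]. destruct (deadline_pending j v Hr Hv) as [A B].
    destruct (Hsafe x) as [C|C]; [contradiction|].
    rewrite B in C. cbn [ext_lt] in C. unfold d in Hv. lra. }
  assert (P : forall v, d <= v <= e -> v = d \/ Dir (rho v) = close).
  { apply real_interval_induction; [unfold d, e; lra|left; auto| |].
    - intros v Hv Pv. assert (Hv0 : 0 <= v) by (unfold d in Hv; lra).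
      destruct (right_val_exists v Hv0) as [sr Hsr]. pose proof Hsr as [e0 [He0 Hc]].
      exists e0. split; [auto|]. intros u Hu. right. rewrite (Hc u Hu).
      destruct Pv as [->|Pv].
      + apply (dir_close_after_deadline d x sr Hv0); [|apply no_guard; lra|auto].
        exact (proj2 (deadline_pending j d Hr ltac:(unfold d, e in *; lra))).
      + apply (dir_stays_close v sr Hv0 Pv); [apply no_guard|]; auto.
    - intros v Hv [e1 [He1 HP]]. right.
      assert (Hv0 : 0 < v) by (unfold d in Hv; lra).
      destruct (left_val_exists v Hv0) as [sl Hsl]. pose proof Hsl as [e0 [He0 Hc]].
      rewrite (proj2 (left_val_internal v sl Hv0 Hsl)).
      destruct (exists_left_near d v e0 e1) as [u [Hu1 [Hu2 Hu3]]]; [lra|lra|lra|].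
      rewrite <- (Hc u) by lra.
      destruct (HP u ltac:(lra)) as [A|A]; [lra|exact A]. }
  destruct (P s ltac:(unfold d, e; lra)) as [A|A]; [unfold d in A; lra|exact A].
Qed.

Lemma becomes_empty_at_exit (t e0 : R) : 0 < t -> 0 < e0 ->
  TrackStatus (rho t) x = empty ->
  (forall v, t - e0 < v < t -> TrackStatus (rho v) x <> empty) ->
  exists j, in_range N (3 * j + 3) /\ t = ts (3 * j + 3)%nat.
Proof.
  intros Ht He0 Hem Hne.
  destruct (in_phase_exists t ltac:(lra)) as [k Hk].
  destruct (status_in_phase k t Hk) as [S1 [S2 S3]].
  destruct (nat_mod3_cases k) as [i [Hi|[Hi|Hi]]];
    [|rewrite (S2 i Hi) in Hem; discriminate|rewrite (S3 i Hi) in Hem; discriminate].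
  pose proof Hk as [Hr [[Hlt|Heq] Hu]].
  - exfalso.
    destruct (exists_left_near (ts k) t e0 e0) as [v [Hv1 [Hv2 _]]]; [lra|lra|lra|].
    assert (Hkv : in_phase N ts k v).
    { split; [auto|]. split; [lra|]. intros Hr'. specialize (Hu Hr'). lra. }
    apply (Hne v ltac:(lra)). exact (proj1 (status_in_phase k v Hkv) i Hi).
  - destruct i as [|j].
    { subst k. destruct Hph as [H0 _]. simpl in Heq. lra. }
    exists j. replace (3 * j + 3)%nat with k by lia. auto.
Qed.

Lemma deadline_not_reached_when_empty (t : R) : 0 <= t ->
  TrackStatus (rho t) x = empty -> Deadline (rho t) x <> Fin t.
Proof.
  intros Ht Hem Hd.
  destruct (in_phase_exists t Ht) as [k Hk].
  destruct (status_in_phase k t Hk) as [_ [S2 S3]].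
  destruct (nat_mod3_cases k) as [i [Hi|[Hi|Hi]]];
    [|rewrite (S2 i Hi) in Hem; discriminate|rewrite (S3 i Hi) in Hem; discriminate].
  destruct (proj1 (deadline_invariant t Ht k Hk) i Hi) as [A|[j [-> [Et A]]]];
    rewrite Hd in A; [discriminate|].
  assert (t = ts (3 * j + 1)%nat + Wd) by congruence. subst k.
  replace (3 * S j)%nat with (3 * j + 3)%nat in * by lia.
  pose proof (crossing_ends_after_deadline j (proj1 Hk)). lra.
Qed.

End Track.

Lemma SafeToOpen_antitone (ct ct' : R) (st : State T) :
  ct' <= ct -> SafeToOpen dopen ct st -> SafeToOpen dopen ct' st.
Proof.
  intros Hle Hsafe y. destruct (Hsafe y) as [A|A]; [left; exact A|right].
  destruct (Deadline st y); simpl in *; [lra|exact I].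
Qed.

Lemma controller_enabled_of_guard (ct : R) (st : State T) :
  SignalOpen_guard dopen ct st -> (forall y, Deadline st y <> Fin ct) ->
  enabled dclose dopen dmin ControllerA ct st.
Proof.
  intros [Hdir Hsafe] Hno. split; [apply ctrl_upd_consistent; left; exact Hno|].
  exists LDir, (VDir open). split.
  - right; right; right. split; [split; auto|reflexivity].
  - simpl. rewrite Hdir. discriminate.
Qed.

(** Otherwise SignalOpen, enabled on a left neighbourhood (away from the
    finitely many deadlines), would have fired there. *)
Lemma unsafe_before_guard (t : R) : 0 < t -> guard t ->
  exists e, 0 < e /\ forall s, t - e < s < t -> ~ safe s.
Proof.
  intros Ht [Hdir _].
  destruct (left_val_exists t Ht) as [sl Hsl]. pose proof Hsl as [e0 [He0 Hc]].
  pose proof (Rmin_l e0 t); pose proof (Rmin_r e0 t).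
  exists (Rmin e0 t). split; [apply Rmin_pos; lra|]. intros s Hs Hsafe.
  rewrite (Hc s) in Hsafe by lra.
  destruct (exists_between_avoiding HT (Deadline sl) (t - Rmin e0 t) s) as [u [Hu Hav]]; [lra|].
  apply (not_fires_on_constant (t - e0) t sl u ControllerA Hc ltac:(lra)).
  apply controller_fires_when_enabled; [lra|].
  rewrite (Hc u) by lra. apply controller_enabled_of_guard; [|exact Hav].
  split.
  - rewrite <- (proj2 (left_val_internal t sl Ht Hsl)). exact Hdir.
  - apply (SafeToOpen_antitone s); [lra|exact Hsafe].
Qed.

(** Deadlines are equal on both sides of [t], so the track that was unsafe just
    before [t] must owe its recovery to its status. *)
Lemma emptied_track_of_safe_gain (t : R) (sl : State T) : 0 < t ->
  safe t -> left_val rho t sl ->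
  (exists e, 0 < e /\ forall s, t - e < s < t -> ~ safe s) ->
  exists x, TrackStatus sl x <> empty /\ TrackStatus (rho t) x = empty.
Proof.
  intros Ht Hsafe Hsl [e [He Hne]].
  pose proof Hsl as [e0 [He0 Hc]].
  destruct (exists_left_near (t - 1) t e e0) as [u [Hu1 [Hu2 Hu3]]]; [lra|lra|lra|].
  pose proof (Hne u ltac:(lra)) as Hnu. rewrite (Hc u) in Hnu by lra.
  apply not_all_ex_not in Hnu as [x Hx].
  exists x. split; [intro; apply Hx; left; auto|].
  destruct (Hsafe x) as [A|A]; [exact A|]. exfalso. apply Hx. right.
  rewrite (proj1 (left_val_internal t sl Ht Hsl)) in A.
  destruct (Deadline sl x); simpl in *; [lra|exact I].
Qed.

Lemma safe_of_safe_right (t : R) : 0 <= t ->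
  (exists e, 0 < e /\ forall s, t < s < t + e -> safe s) -> safe t.
Proof.
  intros Ht [e [He HP]] x.
  destruct (right_val_exists t Ht) as [sr Hsr]. pose proof Hsr as [e0 [He0 Hc]].
  destruct (exists_right_near t e e0 He He0) as [u [Hu1 Hu2]].
  pose proof (HP u Hu1 x) as Hu. rewrite (Hc u) in Hu by lra.
  destruct (right_val_effects t sr Ht Hsr) as [HTS [HD _]].
  destruct Hu as [Hu|Hu]; [left; rewrite <- HTS; exact Hu|].
  destruct (HD x) as [D|[[_ [D _]]|[D _]]].
  - right. rewrite D in Hu. destruct (Deadline (rho t) x); simpl in *; [lra|exact I].
  - right. rewrite D. exact I.
  - left. exact D.
Qed.

Lemma guard_of_becomes_safe (t : R) : 0 < t ->
  becomes_true (fun s => safe s) t -> guard t.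
Proof.
  intros Ht [[Hleft Hsafe]|[Hunsafe Hright]];
    [|exfalso; apply Hunsafe, safe_of_safe_right; [lra|exact Hright]].
  split; [|exact Hsafe].
  destruct (left_val_exists t Ht) as [sl Hsl]. pose proof Hsl as [e0 [He0 Hc]].
  destruct (emptied_track_of_safe_gain t sl Ht Hsafe Hsl Hleft) as [x [Hbefore Hnow]].
  destruct (phases_exist x) as [N [ts Hph]].
  destruct (becomes_empty_at_exit x N ts Hph t e0 Ht He0 Hnow) as [j [Hr ->]].
  { intros v Hv. rewrite (Hc v Hv). exact Hbefore. }
  apply (dir_close_until_exit x N ts Hph j); [exact Hr|].
  pose proof (crossing_ends_after_deadline x N ts Hph j Hr). lra.
Qed.

Lemma controller_fires_of_guard (t : R) : 0 < t -> guard t -> fires ControllerA t.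
Proof.
  intros Ht Hg. apply controller_fires_when_enabled; [lra|].
  apply controller_enabled_of_guard; [exact Hg|]. intros y Hy.
  destruct (proj2 Hg y) as [A|A].
  - destruct (phases_exist y) as [N [ts Hph]].
    exact (deadline_not_reached_when_empty y N ts Hph t ltac:(lra) A Hy).
  - rewrite Hy in A. simpl in A. lra.
Qed.

Lemma track_becomes_empty_of_guard (t : R) : 0 < t -> guard t ->
  exists x, becomes (fun s => TrackStatus (rho s) x) t empty.
Proof.
  intros Ht Hg.
  destruct (left_val_exists t Ht) as [sl Hsl].
  destruct (emptied_track_of_safe_gain t sl Ht (proj2 Hg) Hsl (unsafe_before_guard t Ht Hg))
    as [x [Hbefore Hnow]].
  exists x. left. exists (TrackStatus sl x). split; [|split; [exact Hbefore|exact Hnow]].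
  destruct Hsl as [e0 [He0 Hc]]. exists e0. split; [exact He0|].
  intros s Hs. rewrite (Hc s Hs). reflexivity.
Qed.

End RegularRun.

Theorem mainTheorem8 (T : Type) (HT : Finite T)
  (dclose dopen dmin dmax : R)
  (Hclose : 0 < dclose) (Hopen : 0 < dopen) (Hmin : 0 < dmin) (Hmax : 0 < dmax)
  (Hcm : dclose < dmin) (Hmm : dmin <= dmax)
  (rho : R -> State T)
  (Hreg : regular_run dclose dopen dmin dmax rho)
  (t : R) (Ht : 0 < t) :
  (SignalOpen_guard dopen t (rho t) <->
     becomes_true (fun s => SafeToOpen dopen s (rho s)) t) /\
  (SignalOpen_guard dopen t (rho t) <->
     SignalOpen_fires dclose dopen dmin rho t) /\
  (SignalOpen_fires dclose dopen dmin rho t ->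
     exists x : T, becomes (fun s => TrackStatus (rho s) x) t empty).
Proof.
  split; [|split].
  - split.
    + intros G. left. split; [|exact (proj2 G)].
      eapply unsafe_before_guard with (dclose := dclose) (dmin := dmin); eauto.
    + eapply guard_of_becomes_safe with (dclose := dclose) (dmin := dmin); eauto.
  - split; [|intros [_ G]; exact G].
    intros G. split; [|exact G]. eapply controller_fires_of_guard with (dmax := dmax); eauto.
  - intros [_ G].
    eapply track_becomes_empty_of_guard with (dclose := dclose) (dmin := dmin); eauto.
Qed.
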